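(* Let $0\le b<d\le n$ be integers and fix a homological degree. (1) If $\hat z$ is a relative cycle of the pair $\hat K(b,d]$ that contains a vertical cell $\tau\times\{d\}$ with $\min\tau=d$, then $[\hat z]\notin\operatorname{im}\big(H(\hat K(b,d-1])\to H(\hat K(b,d])\big)$. (2) If $\hat z$ is a relative cycle of the pair $\hat K[b,d)$ that contains a vertical cell $\tau\times\{b\}$ with $\max\tau=b$, then $[\hat z]\notin\operatorname{im}\big(H(\hat K[b+1,d))\to H(\hat K[b,d))\big)$. (3) If $\hat z$ is a cycle in $\hat K[b,d]=\hat K_b^d$ that contains vertical cells $\sigma\times\{b\}$ and $\tau\times\{d\}$ with $\max\sigma=b$ and $\min\tau=d$, then $[\hat z]\notin\operatorname{im}\big(H(\hat K[b+1,d])\to H(\hat K[b,d])\big)$ and $[\hat z]\notin\operatorname{im}\big(H(\hat K[b,d-1])\to H(\hat K[b,d])\big)$.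
   Context: Fix a field $\mathbb F$; all chains and homology groups have coefficients in $\mathbb F$. Let $n\ge 1$ and let $K$ be a finite $\Delta$-complex (distinct simplices may have the same boundary) in which every simplex $\sigma$ carries an integer interval $T(\sigma)=[\min\sigma,\max\sigma]\subseteq[0,n]$ with $\min\sigma<\max\sigma$, such that for each integer $i$ the set $K_i=\{\sigma: i\in T(\sigma)\}$ is a subcomplex (these form a zigzag $K_0\to K_1\leftarrow K_2\to\cdots$), and such that whenever $\sigma$ is a proper face of $\tau$ we have $\min\sigma<\min\tau<\max\tau<\max\sigma$. The prism $\hat K$ is the cell complex whose cells are the vertical cells $\sigma\times\{i\}$ for $\sigma\in K$ and integers $i\in T(\sigma)$ (of dimension $\dim\sigma$) and the horizontal cells $\sigma\times[i,i+1]$ for integers $i$ with $[i,i+1]\subseteq T(\sigma)$ (of dimension $\dim\sigma+1$), with boundary $\partial(\sigma\times\{i\})=(\partial\sigma)\times\{i\}$ and $\partial(\sigma\times[i,i+1])=(\partial\sigma)\times[i,i+1]+(-1)^{\dim\sigma}(\sigma\times\{i+1\}-\sigma\times\{i\})$ (terms not in $\hat K$ do not occur). For integers $i\le j$, $\hat K_i^j$ is the subcomplex of cells $\sigma\times T$ with $T\subseteq[i,j]$; so $\hat K_{-1}^{n+1}=\hat K$. For integers $b\le d$ define the pairs $\hat K[b,d]=(\hat K_b^d,\emptyset)$, $\hat K(b,d]=(\hat K_{-1}^d,\hat K_{-1}^b)$, $\hat K[b,d)=(\hat K_b^{n+1},\hat K_d^{n+1})$, $\hat K(b,d)=(\hat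 K,\hat K_{-1}^b\cup\hat K_d^{n+1})$, and write $H(\cdot)$ for their relative homology; maps between these groups are induced by inclusions of pairs. A relative cycle of a pair $(X,A)$ is a chain in $X$ whose boundary lies in $A$. A chain ''contains'' a cell if the cell's coefficient is nonzero. *)

From HB Require Import structures.
From mathcomp Require Import all_boot all_order all_algebra.
Import GRing.Theory Num.Theory.
Set Implicit Arguments. Unset Strict Implicit. Unset Printing Implicit Defensive.

(* A finite Delta-complex: simplices, dimensions, face maps d_j (j <= dim),
   together with the interval T(s) = [smin s, smax s]. *)
Record dcomplex := DComplex {
  simplex : finType;
  sdim : simplex -> nat;
  face : simplex -> nat -> simplex;
  smin : simplex -> nat;
  smax : simplex -> nat }.

Inductive proper_face (K : dcomplex) : simplex K -> simplex K -> Prop :=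
  | pf_face (t : simplex K) (j : nat) : (0 < sdim t)%N -> (j <= sdim t)%N -> proper_face (face t j) t
  | pf_trans (s r t : simplex K) : proper_face s r -> proper_face r t -> proper_face s t.

Definition valid (K : dcomplex) (n : nat) : Prop :=
  [/\
      forall (t : simplex K) j, (0 < sdim t)%N -> (j <= sdim t)%N ->
        sdim (face t j) = (sdim t).-1,
      forall (t : simplex K) i j, (1 < sdim t)%N -> (i < j)%N -> (j <= sdim t)%N ->
        face (face t j) i = face (face t i) j.-1,
      forall (t : simplex K), (smin t < smax t <= n)%N,
      (* each K_i is a subcomplex *)
      forall i (t : simplex K) j, (0 < sdim t)%N -> (j <= sdim t)%N ->
        (smin t <= i <= smax t)%N -> (smin (face t j) <= i <= smax (face t j))%N
    &
      forall s t : simplex K, proper_face s t ->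
        [/\ (smin s < smin t)%N, (smin t < smax t)%N & (smax t < smax s)%N] ].

(* cells of the prism: (s, i, false) = s x {i}, (s, i, true) = s x [i,i+1] *)
Definition cell (K : dcomplex) (n : nat) := (simplex K * 'I_n.+1 * bool)%type.

Definition inK (K : dcomplex) (n : nat) (e : cell K n) : bool :=
  let: (s, i, h) := e in
  if h then (smin s <= i)%N && (i.+1 <= smax s)%N
  else (smin s <= i <= smax s)%N.

Definition cdim (K : dcomplex) (n : nat) (e : cell K n) : nat :=
  let: (s, i, h) := e in if h then (sdim s).+1 else sdim s.

Local Open Scope ring_scope.

Definition facecoef (F : fieldType) (K : dcomplex) (t s : simplex K) : F :=
  if sdim t is 0 then 0
  else \sum_(j < (sdim t).+1) (-1) ^+ j * ((face t j == s)%:R).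

Definition inc (F : fieldType) (K : dcomplex) (n : nat) (e' e : cell K n) : F :=
  let: (t, i, h') := e' in
  let: (s, k, h) := e in
  match h', h with
  | false, false => (i == k)%:R * facecoef F t s
  | false, true => 0
  | true, true => (i == k)%:R * facecoef F t s
  | true, false =>
      (s == t)%:R * (-1) ^+ (sdim t)
        * (((val k == (val i).+1)%N)%:R - ((k == i)%:R))
  end.

Definition bd (F : fieldType) (K : dcomplex) (n : nat) (c : cell K n -> F)
  (e : cell K n) : F :=
  \sum_(e' : cell K n) c e' * inc F e' e.

Definition subcx (K : dcomplex) (n : nat) (lo hi : int) : pred (cell K n) :=
  fun e => inK e &&
    (let: (s, i, h) := e in
     (lo <= (val i)%:Z) && ((if h then ((val i).+1)%:Z else (val i)%:Z) <= hi)).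

Arguments subcx : clear implicits.

Definition nocell (K : dcomplex) (n : nat) : pred (cell K n) := fun _ => false.

Definition chain_in (F : fieldType) (K : dcomplex) (n : nat)
  (X : pred (cell K n)) (p : nat) (c : cell K n -> F) : Prop :=
  forall e, c e != 0 -> X e /\ cdim e = p.

Definition rel_cycle (F : fieldType) (K : dcomplex) (n : nat)
  (X A : pred (cell K n)) (p : nat) (z : cell K n -> F) : Prop :=
  chain_in X p z /\ (forall e, bd z e != 0 -> A e).

(* [z] lies in the image of H_p(X', A') -> H_p(X, A) (inclusion of pairs):
   z is homologous in (X, A) to a relative cycle of (X', A') *)
Definition in_image (F : fieldType) (K : dcomplex) (n : nat)
  (X' A' X A : pred (cell K n)) (p : nat) (z : cell K n -> F) : Prop :=
  exists (w c a : cell K n -> F),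
    [/\ rel_cycle X' A' p w, chain_in X p.+1 c, chain_in A p a
      & forall e, z e = w e + bd c e + a e].

Definition has_vert_min (F : fieldType) (K : dcomplex) (n : nat)
  (z : cell K n -> F) (k : nat) : Prop :=
  exists (t : simplex K) (i : 'I_n.+1), val i = k /\ smin t = k /\ z (t, i, false) != 0.

Definition has_vert_max (F : fieldType) (K : dcomplex) (n : nat)
  (z : cell K n -> F) (k : nat) : Prop :=
  exists (s : simplex K) (i : 'I_n.+1), val i = k /\ smax s = k /\ z (s, i, false) != 0.

Arguments nocell : clear implicits.

(** A vertical cell [t x {k}] with [min t = k] occurs in the boundary of a
    prism cell only through [s x {k}] with [t] a proper face of [s], which is
    not a cell since then [min s > k], or through [t x [k-1,k]] (not a cell
    either) or [t x [k,k+1]], which is not in [\hat K_lo^k].  So no boundary of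
    a chain of [\hat K_lo^k] meets [t x {k}], and neither does a representative
    from the smaller pair; dually for [max s = b]. *)
From mathcomp Require Import all_boot all_order all_algebra.
From mathcomp Require Import zify.
Import GRing.Theory Num.Theory.
Set Implicit Arguments.
Unset Strict Implicit.
Unset Printing Implicit Defensive.
Local Open Scope ring_scope.

Section PrismBoundary.

Variables (F : fieldType) (K : dcomplex) (n : nat).
Implicit Types (c z : cell K n -> F) (X A : pred (cell K n)).

Lemma chain_in_eq0 X p c e : chain_in X p c -> ~~ X e -> c e = 0.
Proof. by move=> Hc; apply: contraNeq => /Hc[]. Qed.

Lemma bd_neq0 c e :
  bd c e != 0 -> exists e', c e' != 0 /\ inc F e' e != 0.
Proof.
move=> H; have /existsP[e' /andP[? ?]] : [exists e', (c e' != 0) && (inc F e' e != 0)].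
  apply: contraR H => /existsPn H; rewrite /bd big1 // => e' _.
  by case/nandP: (H e') => /negPn/eqP->; rewrite ?mul0r ?mulr0.
by exists e'.
Qed.

Lemma facecoef_neq0 (t s : simplex K) : facecoef F t s != 0 -> proper_face s t.
Proof.
rewrite /facecoef; case E: (sdim t) => [|m]; first by rewrite eqxx.
move=> Hf; have /existsP[j /eqP <-] : [exists j : 'I_m.+2, face t j == s].
  apply: contraR Hf => /existsPn H; rewrite big1 // => j _.
  by rewrite (negbTE (H j)) mulr0.
by apply: pf_face; rewrite E // -ltnS.
Qed.

Lemma inc_vert_neq0 (t tau : simplex K) (i i0 : 'I_n.+1) h :
  inc F (t, i, h) (tau, i0, false) != 0 ->
  if h then t = tau /\ (val i0 = (val i).+1 \/ i0 = i)
  else i = i0 /\ proper_face tau t.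
Proof.
case: h => /=.
  case: (eqVneq tau t) => [<- | _]; last by rewrite !mul0r eqxx.
  case: (eqVneq (i0 : nat) i.+1) => [-> _ | _ Hi]; first by split=> //; left.
  split=> //; right; apply/eqP; apply: contraNT Hi => /negPf->.
  by rewrite subrr mulr0.
case: (eqVneq i i0) => [-> | _]; last by rewrite mul0r eqxx.
by rewrite mul1r => /facecoef_neq0.
Qed.

Lemma in_image_eq0 (X' A' X A : pred (cell K n)) p z e :
  in_image X' A' X A p z -> ~~ X' e -> ~~ A e ->
  (forall c, chain_in X p.+1 c -> bd c e = 0) -> z e = 0.
Proof.
move=> [w [c [a [[Hw _] Hc Ha ->]]]] nX' nA bd0.
by rewrite (chain_in_eq0 Hw nX') (chain_in_eq0 Ha nA) bd0 // add0r addr0.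
Qed.

Hypothesis HK : valid K n.

Lemma bd_vert_min_eq0 lo (k p : nat) c (tau : simplex K) (i0 : 'I_n.+1) :
  chain_in (subcx K n lo k%:Z) p c -> smin tau = k -> val i0 = k ->
  bd c (tau, i0, false) = 0.
Proof.
move=> Hc Ht Hi; apply/eqP; apply: contraT => /bd_neq0[[[t i] h] [/Hc[]]].
case: HK => _ _ _ _ Hpf; rewrite /subcx /inK => + _ /inc_vert_neq0.
case: h => [/andP[/andP[? ?] /andP[? ?]] [Et [Hv | Ei]] | ]; subst.
- by move: Hv; simpl in *; lia.
- by simpl in *; lia.
- by move=> /andP[/andP[? _] _] [Ei /Hpf[? _ _]]; subst; simpl in *; lia.
Qed.

Lemma bd_vert_max_eq0 (k : nat) hi p c (tau : simplex K) (i0 : 'I_n.+1) :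
  chain_in (subcx K n k%:Z hi) p c -> smax tau = k -> val i0 = k ->
  bd c (tau, i0, false) = 0.
Proof.
move=> Hc Ht Hi; apply/eqP; apply: contraT => /bd_neq0[[[t i] h] [/Hc[]]].
case: HK => _ _ _ _ Hpf; rewrite /subcx /inK => + _ /inc_vert_neq0.
case: h => [/andP[/andP[? ?] /andP[? ?]] [Et [Hv | Ei]] | ]; subst.
- by move: Hv; simpl in *; lia.
- by simpl in *; lia.
- by move=> /andP[/andP[_ ?] _] [Ei /Hpf[_ _ ?]]; subst; simpl in *; lia.
Qed.

End PrismBoundary.

Theorem lemma5p1 (F : fieldType) (n : nat) (K : dcomplex) (HK : valid K n)
  (hn : (1 <= n)%N) (b d p : nat) (hbd : (b < d)%N) (hdn : (d <= n)%N) :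
  (* (1) pair \hat K(b,d] = (\hat K_{-1}^d, \hat K_{-1}^b) *)
  (forall z : cell K n -> F,
     rel_cycle (subcx K n (-1) d%:Z) (subcx K n (-1) b%:Z) p z ->
     has_vert_min z d ->
     ~ in_image (subcx K n (-1) (d%:Z - 1)) (subcx K n (-1) b%:Z)
                (subcx K n (-1) d%:Z) (subcx K n (-1) b%:Z) p z)
  /\
  (* (2) pair \hat K[b,d) = (\hat K_b^{n+1}, \hat K_d^{n+1}) *)
  (forall z : cell K n -> F,
     rel_cycle (subcx K n b%:Z (n%:Z + 1)) (subcx K n d%:Z (n%:Z + 1)) p z ->
     has_vert_max z b ->
     ~ in_image (subcx K n (b%:Z + 1) (n%:Z + 1)) (subcx K n d%:Z (n%:Z + 1))
                (subcx K n b%:Z (n%:Z + 1)) (subcx K n d%:Z (n%:Z + 1)) p z)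
  /\
  (* (3) pair \hat K[b,d] = (\hat K_b^d, empty) *)
  (forall z : cell K n -> F,
     rel_cycle (subcx K n b%:Z d%:Z) (nocell K n) p z ->
     has_vert_max z b -> has_vert_min z d ->
     ~ in_image (subcx K n (b%:Z + 1) d%:Z) (nocell K n)
                (subcx K n b%:Z d%:Z) (nocell K n) p z
     /\
     ~ in_image (subcx K n b%:Z (d%:Z - 1)) (nocell K n)
                (subcx K n b%:Z d%:Z) (nocell K n) p z).
Proof.
split; [|split].
- move=> z _ [t [i [Hi [Ht /eqP Hz]]]] /in_image_eq0 z0; apply/Hz/z0.
  + by rewrite /subcx /=; lia.
  + by rewrite /subcx /=; lia.
  + by move=> c /bd_vert_min_eq0; apply.
- move=> z _ [t [i [Hi [Ht /eqP Hz]]]] /in_image_eq0 z0; apply/Hz/z0.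
  + by rewrite /subcx /=; lia.
  + by rewrite /subcx /=; lia.
  + by move=> c /bd_vert_max_eq0; apply.
- move=> z _ [s [i [Hi [Hs /eqP Hzs]]]] [t [j [Hj [Ht /eqP Hzt]]]].
  split=> [/in_image_eq0 z0 | /in_image_eq0 z0].
  + apply/Hzs/z0 => //; first by rewrite /subcx /=; lia.
    by move=> c /bd_vert_max_eq0; apply.
  + apply/Hzt/z0 => //; first by rewrite /subcx /=; lia.
    by move=> c /bd_vert_min_eq0; apply.
Qed.
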